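(* The $\mathbb F$-algebra homomorphism $\phi:\mathcal O\to\Delta$ that sends $X\mapsto A$ and $Y\mapsto B$ is not injective.
   Context: Let $\mathbb F$ be a field and fix a nonzero $q\in\mathbb F$ with $q^4\neq 1$; $[3]_q=q^2+1+q^{-2}$. The universal Askey--Wilson algebra $\Delta$ is the associative $\mathbb F$-algebra with 1 with generators $A,B,C$ subject to the relations that each of $A+\frac{qBC-q^{-1}CB}{q^2-q^{-2}}$, $B+\frac{qCA-q^{-1}AC}{q^2-q^{-2}}$, $C+\frac{qAB-q^{-1}BA}{q^2-q^{-2}}$ is central. The $q$-Onsager algebra $\mathcal O$ is the $\mathbb F$-algebra with generators $X,Y$ and relations $X^3Y-[3]_q X^2YX+[3]_q XYX^2-YX^3 = -(q^2-q^{-2})^2(XY-YX)$ and $Y^3X-[3]_q Y^2XY+[3]_q YXY^2-XY^3 = -(q^2-q^{-2})^2(YX-XY)$. (The homomorphism $\phi$ exists since $A,B$ satisfy these relations in $\Delta$.) *)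

From HB Require Import structures.
From mathcomp Require Import all_boot all_order all_algebra.
Set Implicit Arguments. Unset Strict Implicit. Unset Printing Implicit Defensive.
Import GRing.Theory.
Local Open Scope ring_scope.

(* Noncommutative polynomial expressions over F in two variables X, Y
   (syntactic representatives of elements of the free algebra F<X,Y>). *)
Inductive ncpoly2 (F : Type) : Type :=
| NCX : ncpoly2 F
| NCY : ncpoly2 F
| NCconst : F -> ncpoly2 F
| NCadd : ncpoly2 F -> ncpoly2 F -> ncpoly2 F
| NCopp : ncpoly2 F -> ncpoly2 F
| NCmul : ncpoly2 F -> ncpoly2 F -> ncpoly2 F.

Fixpoint nceval (F : fieldType) (R : algType F) (x y : R) (p : ncpoly2 F) : R :=
  match p with
  | NCX => x
  | NCY => y
  | NCconst c => c%:A
  | NCadd p1 p2 => nceval x y p1 + nceval x y p2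
  | NCopp p1 => - nceval x y p1
  | NCmul p1 p2 => nceval x y p1 * nceval x y p2
  end.

Definition qint3 (F : fieldType) (q : F) : F := q ^+ 2 + 1 + q ^- 2.

Definition qOnsager_rel (F : fieldType) (q : F) (R : algType F) (x y : R) : Prop :=
  x ^+ 3 * y - qint3 q *: (x ^+ 2 * y * x) + qint3 q *: (x * y * x ^+ 2) - y * x ^+ 3
    = - ((q ^+ 2 - q ^- 2) ^+ 2) *: (x * y - y * x) /\
  y ^+ 3 * x - qint3 q *: (y ^+ 2 * x * y) + qint3 q *: (y * x * y ^+ 2) - x * y ^+ 3
    = - ((q ^+ 2 - q ^- 2) ^+ 2) *: (y * x - x * y).

Definition central3 (F : fieldType) (R : algType F) (a b c z : R) : Prop :=
  z * a = a * z /\ z * b = b * z /\ z * c = c * z.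

Definition UAW_rel (F : fieldType) (q : F) (R : algType F) (a b c : R) : Prop :=
  let d := (q ^+ 2 - q ^- 2)^-1 in
  central3 a b c (a + d *: (q *: (b * c) - q^-1 *: (c * b))) /\
  central3 a b c (b + d *: (q *: (c * a) - q^-1 *: (a * c))) /\
  central3 a b c (c + d *: (q *: (a * b) - q^-1 *: (b * a))).

(* An element p of F<X,Y> maps to 0 in Delta under X |-> A, Y |-> B
   (universal property of the presentation of Delta). *)
Definition zero_in_UAW (F : fieldType) (q : F) (p : ncpoly2 F) : Prop :=
  forall (R : algType F) (a b c : R), UAW_rel q a b c -> nceval a b p = 0.

(* An element p of F<X,Y> is nonzero in O (universal property of the
   presentation of O). *)
Definition nonzero_in_qOnsager (F : fieldType) (q : F) (p : ncpoly2 F) : Prop :=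
  exists (R : algType F) (x y : R), qOnsager_rel q x y /\ nceval x y p <> 0.

Definition phi_not_injective (F : fieldType) (q : F) : Prop :=
  exists p : ncpoly2 F, nonzero_in_qOnsager q p /\ zero_in_UAW q p.

From HB Require Import structures.
From mathcomp Require Import all_boot all_order all_algebra.
From mathcomp Require Import ring.
Set Implicit Arguments. Unset Strict Implicit. Unset Printing Implicit Defensive.
Import GRing.Theory.
Local Open Scope ring_scope.

(* In the universal Askey-Wilson algebra let alpha = A + (qBC - q^-1 CB)/d and
   gamma = C + (qAB - q^-1 BA)/d, with d = q^2 - q^-2, be the central elements.
   Then U = B^2 A - (q^2 + q^-2) BAB + AB^2 equals
   d^2 (alpha - A) + d (q^-1 gamma B - q B gamma), hence
   [U, A] = d (q - q^-1) gamma [A, B], and the centrality of gamma makes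
   P = [U, A] A [A, B] - [A, B] A [U, A] vanish.  In the q-Onsager algebra P is
   nonzero: X lower and Y upper triangular 4 x 4 matrices with diagonal
   (theta 0, theta 1, theta 1, theta 2), theta i = q^2i + q^-2i, satisfy the
   q-Onsager relations, and the (3, 2) entry of P(X, Y) is -1. *)

Section LinearCombination.
Variables (F : fieldType) (V : lmodType F).

Definition lincomb (s : seq V) (c : 'rV[F]_(size s)) : V := \sum_i c 0 i *: s`_i.
Arguments lincomb : clear implicits.

Lemma lincombD s c1 c2 : lincomb s (c1 + c2) = lincomb s c1 + lincomb s c2.
Proof. by rewrite /lincomb -big_split; apply: eq_bigr => i _; rewrite mxE scalerDl. Qed.

Lemma lincombN s c : lincomb s (- c) = - lincomb s c.
Proof. by rewrite /lincomb -sumrN; apply: eq_bigr => i _; rewrite mxE scaleNr. Qed.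

Lemma lincombZ s k c : lincomb s (k *: c) = k *: lincomb s c.
Proof. by rewrite /lincomb scaler_sumr; apply: eq_bigr => i _; rewrite mxE scalerA. Qed.

Lemma lincomb_delta s (i : 'I_(size s)) : s`_i = lincomb s (delta_mx 0 i).
Proof.
rewrite /lincomb (bigD1 i) //= mxE !eqxx scale1r big1 ?addr0 // => j /negbTE ji.
by rewrite mxE ji andbF scale0r.
Qed.

End LinearCombination.
Arguments lincomb {F V}.

Ltac lincomb_atoms L s t k :=
  lazymatch t with
  | nil => idtac
  | ?x :: ?t' =>
    let E := fresh "E" in
    have E : x = L _ := @lincomb_delta _ _ s (@Ordinal (size s) k isT);
    rewrite ?E; clear E; lincomb_atoms L s t' (S k)
  end.

(* The vectors of [s] must be listed so that none is a subterm of a later one;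
   one goal in F remains per coordinate. *)
Ltac lincomb_collect s :=
  let S := fresh "S" in let L := fresh "L" in
  pose S := s; pose L := lincomb S;
  lincomb_atoms L S s O;
  do ?[rewrite -[L _ + L _]lincombD | rewrite -[- L _]lincombN
      | rewrite -[_ *: L _]lincombZ];
  congr (L _); apply/rowP; case;
  repeat first [by [] | case; [move=> ?; rewrite !mxE /= | ]].

Ltac nc_expand :=
  do ![rewrite !(mulrDl, mulrDr, mulNr, mulrN, mulrA) | rewrite -scalerAl
      | rewrite -scalerAr].

Section OnsagerKernelElement.
Variables (F : fieldType) (q : F) (R : algType F).

Definition lie (x y : R) : R := x * y - y * x.

Definition onsagerU (x y : R) : R :=
  y * (y * x) - (q ^+ 2 + q ^- 2) *: (y * (x * y)) + x * (y * y).

Definition onsager_kernel_elt (x y : R) : R :=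
  lie (onsagerU x y) x * (x * lie x y) - lie x y * (x * lie (onsagerU x y) x).

Definition aw_central (x y z : R) : R :=
  x + (q ^+ 2 - q ^- 2)^-1 *: (q *: (y * z) - q^-1 *: (z * y)).

End OnsagerKernelElement.

Definition nclie (F : Type) (p1 p2 : ncpoly2 F) : ncpoly2 F :=
  NCadd (NCmul p1 p2) (NCopp (NCmul p2 p1)).

Definition ncOnsagerU (F : fieldType) (q : F) : ncpoly2 F :=
  NCadd (NCadd (NCmul (NCY F) (NCmul (NCY F) (NCX F)))
               (NCopp (NCmul (NCconst (q ^+ 2 + q ^- 2))
                             (NCmul (NCY F) (NCmul (NCX F) (NCY F))))))
        (NCmul (NCX F) (NCmul (NCY F) (NCY F))).

Definition ncOnsager_kernel_elt (F : fieldType) (q : F) : ncpoly2 F :=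
  let U := nclie (ncOnsagerU q) (NCX F) in
  let M := nclie (NCX F) (NCY F) in
  NCadd (NCmul U (NCmul (NCX F) M)) (NCopp (NCmul M (NCmul (NCX F) U))).

Lemma nceval_kernel_elt (F : fieldType) (q : F) (R : algType F) (x y : R) :
  nceval x y (ncOnsager_kernel_elt q) = onsager_kernel_elt q x y.
Proof. by rewrite /= mulr_algl. Qed.

Section UniversalAskeyWilson.
Variables (F : fieldType) (q : F) (R : algType F) (a b c : R).
Hypotheses (q_neq0 : q != 0) (q4_neq1 : q ^+ 4 != 1).

Local Notation d := (q ^+ 2 - q ^- 2).
Local Notation alpha := (aw_central q a b c).
Local Notation gamma := (aw_central q c a b).

Let field_nonzero : (q != 0) && ((q * q) ^+ 2 - 1 != 0).
Proof. by rewrite q_neq0 subr_eq0 -expr2 -exprM. Qed.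

Lemma onsagerU_aw_central :
  onsagerU q a b = d ^+ 2 *: (alpha - a) + d *: (q^-1 *: (gamma * b) - q *: (b * gamma)).
Proof.
rewrite /onsagerU /aw_central; nc_expand.
lincomb_collect [:: b * b * a; b * a * b; a * b * b; b * c; c * b; a].
all: by field; exact: field_nonzero.
Qed.

Hypotheses (alpha_a : alpha * a = a * alpha) (gamma_a : gamma * a = a * gamma)
  (gamma_b : gamma * b = b * gamma).

Lemma lie_onsagerU_aw_central :
  lie (onsagerU q a b) a = (d * (q - q^-1)) *: (gamma * lie a b).
Proof.
rewrite onsagerU_aw_central -gamma_b /lie.
(* Abstracting alpha and gamma keeps [nc_expand] from unfolding them. *)
move: alpha_a gamma_a; set al := alpha; set ga := gamma; clearbody al ga => al_a ga_a.
nc_expand; rewrite -al_a -ga_a.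
lincomb_collect [:: al * a; ga * b * a; ga * a * b; a * a].
all: by field.
Qed.

Lemma onsager_kernel_elt_aw_central : onsager_kernel_elt q a b = 0.
Proof.
have gamma_m : GRing.comm gamma (lie a b).
  by apply: commrB; apply: commrM.
rewrite /onsager_kernel_elt lie_onsagerU_aw_central -scalerAl -!scalerAr -scalerBr.
rewrite [a * (gamma * _)]mulrA -gamma_a -mulrA [lie a b * (gamma * _)]mulrA -gamma_m.
by rewrite !mulrA subrr scaler0.
Qed.
End UniversalAskeyWilson.

Section FourDimensionalRepresentation.
Variables (F : fieldType) (q : F).
Hypothesis q_neq0 : q != 0.

Definition col4 (v0 v1 v2 v3 : F) : 'cV[F]_4 := \col_i [:: v0; v1; v2; v3]`_i.

Lemma col4D a b c d a' b' c' d' :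
  col4 a b c d + col4 a' b' c' d' = col4 (a + a') (b + b') (c + c') (d + d').
Proof. by apply/colP => -[[|[|[|[|//]]]] ?]; rewrite !mxE. Qed.

Lemma col4N a b c d : - col4 a b c d = col4 (- a) (- b) (- c) (- d).
Proof. by apply/colP => -[[|[|[|[|//]]]] ?]; rewrite !mxE. Qed.

Lemma col4Z k a b c d : k *: col4 a b c d = col4 (k * a) (k * b) (k * c) (k * d).
Proof. by apply/colP => -[[|[|[|[|//]]]] ?]; rewrite !mxE. Qed.

Lemma eq_mx_col4 (A B : 'M[F]_4) :
  (forall a b c d, A *m col4 a b c d = B *m col4 a b c d) -> A = B.
Proof.
move=> eqAB; apply/matrixP => i j.
have /colP/(_ i) : col j A = col j B.
  rewrite !colE; suff -> : delta_mx j 0 = col4 (j == 0 :> nat)%:R (j == 1 :> nat)%:R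
                                          (j == 2 :> nat)%:R (j == 3 :> nat)%:R by [].
  by apply/colP => k; rewrite !mxE; case: k j => -[|[|[|[|//]]]] ? -[[|[|[|[|//]]]] ?].
by rewrite !mxE.
Qed.

Definition theta (i : nat) : F := q ^+ (2 * i) + q ^- (2 * i).

Definition mx4 (r : seq (seq F)) : 'M[F]_4 := \matrix_(i, j) (nth [::] r i)`_j.

Definition onsagerX : 'M[F]_4 := mx4
  [:: [:: theta 0; 0; 0; 0];
      [:: 1; theta 1; 0; 0];
      [:: 0; 0; theta 1; 0];
      [:: 0; 1; 0; theta 2]].

Definition onsagerY : 'M[F]_4 := mx4
  [:: [:: theta 0; (q ^+ 2 - q ^- 2) ^+ 2 * (q - q^-1) ^+ 2 * theta 1; 1; 0];
      [:: 0; theta 1; 0; 0];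
      [:: 0; 0; theta 1; 1];
      [:: 0; 0; 0; theta 2]].

Lemma onsagerX_col4 a b c d :
  onsagerX *m col4 a b c d = col4 (theta 0 * a) (a + theta 1 * b) (theta 1 * c) (b + theta 2 * d).
Proof.
apply/colP => i; rewrite !mxE !big_ord_recr big_ord0 /= !mxE.
by case: i => -[|[|[|[|//]]]] ? /=; ring.
Qed.

Lemma onsagerY_col4 a b c d :
  onsagerY *m col4 a b c d =
  col4 (theta 0 * a + (q ^+ 2 - q ^- 2) ^+ 2 * (q - q^-1) ^+ 2 * theta 1 * b + c)
       (theta 1 * b) (theta 1 * c + d) (theta 2 * d).
Proof.
apply/colP => i; rewrite !mxE !big_ord_recr big_ord0 /= !mxE.
by case: i => -[|[|[|[|//]]]] ? /=; ring.
Qed.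

Ltac push_col4 :=
  rewrite ?exprSr ?expr0 ?mul1r -?mulmxE;
  do ?[rewrite mulmxDl | rewrite mulNmx | rewrite -scalemxAl | rewrite -mulmxA
      | rewrite onsagerX_col4 | rewrite onsagerY_col4 | rewrite col4N | rewrite col4Z
      | rewrite col4D].

Lemma onsagerXY_qOnsager_rel : qOnsager_rel q onsagerX onsagerY.
Proof.
split; apply: eq_mx_col4 => a b c d; push_col4; rewrite /theta /qint3; congr col4.
all: by field; rewrite q_neq0 ?oner_eq0.
Qed.

Lemma onsager_kernel_elt_XY_32 : onsager_kernel_elt q onsagerX onsagerY 3 2 = -1.
Proof.
have e2 : delta_mx 2 0 = col4 0 0 1 0 by apply/colP => -[[|[|[|[|//]]]] ?]; rewrite !mxE.
transitivity (col 2 (onsager_kernel_elt q onsagerX onsagerY) 3 0); first by rewrite [RHS]mxE.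
rewrite colE e2 /onsager_kernel_elt /onsagerU /lie; push_col4.
by rewrite !mxE /= /theta; field; rewrite q_neq0 ?oner_eq0.
Qed.

Lemma onsager_kernel_elt_XY_neq0 : onsager_kernel_elt q onsagerX onsagerY != 0.
Proof.
apply/eqP => P0; have := onsager_kernel_elt_XY_32.
by rewrite P0 mxE => /eqP; rewrite eq_sym oppr_eq0 oner_eq0.
Qed.
End FourDimensionalRepresentation.

Theorem theorem10p9 (F : fieldType) (q : F) (hq0 : q != 0) (hq4 : q ^+ 4 != 1) :
  phi_not_injective q.
Proof.
exists (ncOnsager_kernel_elt q); split.
  exists 'M[F]_4, (onsagerX q), (onsagerY q); rewrite nceval_kernel_elt.
  by split; [exact: onsagerXY_qOnsager_rel | exact/eqP/onsager_kernel_elt_XY_neq0].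
move=> R a b c [[alpha_a _] [_ [gamma_a [gamma_b _]]]].
by rewrite nceval_kernel_elt (onsager_kernel_elt_aw_central hq0 hq4 alpha_a gamma_a gamma_b).
Qed.
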